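(* Let $d\ge1$, let $\preceq$ be a term order and let $J\subset S$ be a saturated Borel ideal which is a hilb-segment ideal w.r.t. $\preceq$ with Hilbert polynomial $p_{S/J}(z)=d$. Let $\mathcal B=\{x^\beta\in\mathbb T_d\setminus J : x_1x^\beta\in J\}$. Then $ed(\mathcal St_h(J,\preceq))\ge |G(J)|\cdot|\mathcal B|$.
   Context: $S=K[x_0,\dots,x_n]$, $K$ algebraically closed of characteristic $0$, standard grading, $x_0<x_1<\dots<x_n$; $\mathbb T_t$ is the set of terms of degree $t$; $G(J)$ is the set of minimal monomial generators of $J$. A monomial ideal is Borel if $x^\alpha\in J$, $\alpha_j>0$, $j<n$ imply $x^\alpha x_{j+1}/x_j\in J$. Given a term order, $B\subseteq\mathbb T_t$ is a segment if $\tau\in B$, $\tau'\in\mathbb T_t$, $\tau'\succ\tau$ imply $\tau'\in B$; a saturated Borel ideal with constant Hilbert polynomial $d$ is a hilb-segment ideal if $J\cap\mathbb T_d$ is a segment ($d$ being the Gotzmann number of the constant polynomial $d$). Homogeneous Gröbner stratum: $\mathcal St_h(J,\preceq)$ is the affine scheme parametrizing homogeneous ideals of $S$ whose initial ideal w.r.t. $\preceq$ is $J_{\ge d}$; explicitly, for each minimal generator $x^\alpha$ of $J_{\ge d}$ of degree $t$ one sets $F_\alpha=x^\alpha+\sum c_{\alpha\beta}x^\beta$, the sum over terms $x^\beta\in\mathbb T_t\setminus J$ with $x^\beta\prec x^\alpha$, with new variables $c_{\alpha\beta}$; the defining ideal in $K[c_{\alpha\beta}]$ is generated by the $x$-coefficients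 of the reductions of all $S$-polynomials $S(F_\alpha,F_{\alpha'})$ modulo $\{F_\alpha\}$. The point $J$ is the origin, and $ed(\mathcal St_h(J,\preceq))$ denotes the embedding dimension, i.e. the dimension of the Zariski tangent space of the stratum at the origin. *)

From HB Require Import structures.
From mathcomp Require Import all_boot all_order all_algebra.
Set Implicit Arguments.
Unset Strict Implicit.
Unset Printing Implicit Defensive.
Import GRing.Theory.

(* Terms (monomials) of S = K[x_0,...,x_n], as exponent vectors.       *)
Section Terms.
Variable n : nat.

Definition mon := {ffun 'I_n.+1 -> nat}.
Definition mdeg (a : mon) : nat := (\sum_(i < n.+1) a i)%N.
Definition mmul (a b : mon) : mon := [ffun i => (a i + b i)%N].
Definition mdvd (a b : mon) : bool := [forall i, a i <= b i]%N.
Definition mquo (b a : mon) : mon := [ffun i => (b i - a i)%N].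
Definition mlcm (a b : mon) : mon := [ffun i => maxn (a i) (b i)].
Definition mone : mon := [ffun => 0%N].
Definition xvar (i : 'I_n.+1) : mon := [ffun j => nat_of_bool (j == i)].

Definition mon_of_bnd t (f : {ffun 'I_n.+1 -> 'I_t.+1}) : mon :=
  [ffun i => nat_of_ord (f i)].
Definition monsOfDeg (t : nat) : seq mon :=
  [seq m <- map (@mon_of_bnd t) (enum {ffun 'I_n.+1 -> 'I_t.+1}) | mdeg m == t].

(* A monomial ideal J is given by a finite set of monomial generators G;
   x^a \in J iff some generator divides x^a. *)
Definition inJ (G : seq mon) (a : mon) : bool := has (fun g => mdvd g a) G.

Definition minimal_gens (G : seq mon) : Prop :=
  uniq G /\ (forall g h, g \in G -> h \in G -> mdvd g h -> g = h).

(* Borel-fixed (strongly stable) w.r.t. x_0 < x_1 < ... < x_n. *)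
Definition borel (G : seq mon) : Prop :=
  forall (a : mon) (j : 'I_n.+1), (j < n)%N -> inJ G a -> (0 < a j)%N ->
    inJ G (mmul (mquo a (xvar j)) (xvar (inord j.+1))).

(* Saturated: J = J : m^infty. *)
Definition saturated (G : seq mon) : Prop :=
  forall a : mon,
    (exists k, forall g : mon, mdeg g = k -> inJ G (mmul a g)) -> inJ G a.

Definition hilbFun (G : seq mon) (t : nat) : nat :=
  count (fun m => ~~ inJ G m) (monsOfDeg t).
Definition hilbPolyConst (G : seq mon) (d : nat) : Prop :=
  exists t0, forall t, (t0 <= t)%N -> hilbFun G t = d.

Definition term_order (le : rel mon) : Prop :=
  [/\ reflexive le, antisymmetric le, transitive le, total le &
      (forall a b c, le a b -> le (mmul a c) (mmul b c))] /\
  (forall a, le mone a).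
Definition tlt (le : rel mon) (a b : mon) : bool := le a b && (a != b).

(* hilb-segment: J \cap T_d is a segment (d = Gotzmann number of the constant d). *)
Definition hilb_segment (le : rel mon) (G : seq mon) (d : nat) : Prop :=
  forall a b : mon, mdeg a = d -> mdeg b = d -> inJ G a -> le a b -> inJ G b.

Definition Bset (G : seq mon) (d : nat) : seq mon :=
  [seq b <- monsOfDeg d | ~~ inJ G b && inJ G (mmul (xvar (inord 1)) b)].

(* The minimal generators of J_{>=d} have degree <= max(d, max deg G), *)
(* so all a, b involved have exponents bounded by Dbnd below; we index *)
(* them by the finite type BM (this only serves to make the index set  *)
(* of the variables c_{ab} a finite type).                             *)
Definition Dbnd (G : seq mon) (d : nat) : nat := (d + \sum_(g <- G) mdeg g)%N.
Definition BM (G : seq mon) (d : nat) := {ffun 'I_n.+1 -> 'I_(Dbnd G d).+1}.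
Definition bm G d (f : BM G d) : mon := mon_of_bnd f.

Definition isGen (G : seq mon) (d : nat) (a : BM G d) : bool :=
  [&& inJ G (bm a), (d <= mdeg (bm a))%N &
      [forall b : BM G d, (mdvd (bm b) (bm a) && (bm b != bm a)) ==>
                           ~~ (inJ G (bm b) && (d <= mdeg (bm b))%N)]].

(* (a,b) indexes a variable c_{ab}: x^a minimal generator of J_{>=d},
   x^b in T_{deg a} \ J, x^b < x^a. *)
Definition isVar (le : rel mon) (G : seq mon) (d : nat) (p : BM G d * BM G d) : bool :=
  [&& isGen p.1, mdeg (bm p.2) == mdeg (bm p.1), ~~ inJ G (bm p.2) &
      tlt le (bm p.2) (bm p.1)].

Definition Var (le : rel mon) (G : seq mon) (d : nat) := {p : BM G d * BM G d | isVar le p}.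
Definition nvars (le : rel mon) (G : seq mon) (d : nat) : nat := #|{: Var le G d}|.

(* Polynomials of S with coefficients in a ring R: coefficient functions. *)
Definition xshift (R : nzRingType) (c : R) (dl : mon) (P : mon -> R) : mon -> R :=
  fun m => if mdvd dl m then (c * P (mquo m dl))%R else 0%R.

Section Reduction.
Variables (R : nzRingType) (G : seq mon) (d : nat) (F : BM G d -> mon -> R).

(* H reduces (in finitely many steps) to H' modulo the marked family
   {F_a : a minimal generator of J_{>=d}} (head term of F_a is x^a):
   a step replaces H by H - (coeff of x^m in H) x^(m-a) F_a, x^a | x^m. *)
Inductive reduces : (mon -> R) -> (mon -> R) -> Prop :=
| red_refl H : reduces H H
| red_step H (a : BM G d) (m : mon) H' :
    isGen a -> mdvd (bm a) m ->
    reduces (fun m' => (H m' - xshift (H m) (mquo m (bm a)) (F a) m')%R) H' ->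
    reduces H H'.

Definition reduced (H : mon -> R) : Prop :=
  forall m, inJ G m -> (d <= mdeg m)%N -> H m = 0%R.
End Reduction.

Section Tangent.
Variables (K : fieldType) (le : rel mon) (G : seq mon) (d : nat).

(* F_a specialised at c = eps * v, with K[eps] realised inside {poly K}. *)
Definition markedF (v : 'rV[K]_(nvars le G d)) (a : BM G d) : mon -> {poly K} :=
  fun m => ((m == bm a)%:R +
     \sum_(x : Var le G d | ((sval x).1 == a) && (bm (sval x).2 == m))
        (v 0 (enum_rank x))%:P * 'X)%R.

Definition Spoly (v : 'rV[K]_(nvars le G d)) (a a' : BM G d) : mon -> {poly K} :=
  let L := mlcm (bm a) (bm a') in
  fun m => (xshift 1 (mquo L (bm a)) (markedF v a) m -
            xshift 1 (mquo L (bm a')) (markedF v a') m)%R.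

(* v is a Zariski tangent vector of St_h(J,le) at the origin: every
   generator g of the defining ideal (an x-coefficient of a complete
   reduction of an S-polynomial) has vanishing differential at 0 in
   direction v, i.e. g(eps v) has zero eps-coefficient. *)
Definition tangentVec (v : 'rV[K]_(nvars le G d)) : Prop :=
  forall a a' : BM G d, isGen a -> isGen a' -> a != a' ->
  forall H : mon -> {poly K},
    reduces (markedF v) (Spoly v a a') H -> reduced G d H ->
    forall m, ((H m)`_1 = 0)%R.
End Tangent.

End Terms.

(** Let a be a minimal generator of J. As J is saturated and Borel, x_0 does
    not divide a, and deg a <= d (otherwise the Hilbert function of S/J would
    eventually exceed d). So a' = a x_0^(d - deg a) is a minimal generator of
    J_{>=d}, and for b in B the hilb-segment property gives x^b < a', so
    c_{a',b} is a variable of the stratum. These |G(J)| |B| variables are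
    distinct, and each coordinate direction is tangent at the origin:
    substituting c = eps e for that coordinate, the S-polynomials and their
    reductions have no eps-term outside J_{>=d}. Indeed the eps-term of
    S(F_a', F_a'') is x^(lcm/a') x^b up to a scalar; if x^(lcm/a') involves
    some x_j, j > 0, then x_j x^b is in J by the Borel property (as x_1 x^b
    is), and otherwise a' and a'' would divide one another. *)

From HB Require Import structures.
From mathcomp Require Import all_boot all_order all_algebra.
From mathcomp Require Import zify.

Set Implicit Arguments.
Unset Strict Implicit.
Unset Printing Implicit Defensive.
Import GRing.Theory.

Section Monomials.
Variable n : nat.
Implicit Types (a b c g m : mon n) (i j : 'I_n.+1).

Lemma mdvdP a b : reflect (forall i, a i <= b i) (mdvd a b).
Proof. exact: forallP. Qed.

Lemma mdvd_refl a : mdvd a a.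
Proof. by apply/mdvdP. Qed.

Lemma mdvd_trans a b c : mdvd a b -> mdvd b c -> mdvd a c.
Proof. by move=> /mdvdP ab /mdvdP bc; apply/mdvdP=> i; apply: leq_trans (ab i) (bc i). Qed.

Lemma mdvd_anti a b : mdvd a b -> mdvd b a -> a = b.
Proof. by move=> /mdvdP ab /mdvdP ba; apply/ffunP=> i; apply/anti_leq; rewrite ab ba. Qed.

Lemma mmulC a b : mmul a b = mmul b a.
Proof. by apply/ffunP=> i; rewrite !ffunE addnC. Qed.

Lemma mdvd_mull a b : mdvd a (mmul a b).
Proof. by apply/mdvdP=> i; rewrite ffunE leq_addr. Qed.

Lemma mdvd_mquo a b : mdvd (mquo b a) b.
Proof. by apply/mdvdP=> i; rewrite ffunE leq_subr. Qed.

Lemma mdvd_mmul2r a b c : mdvd a b -> mdvd (mmul a c) (mmul b c).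
Proof. by move=> /mdvdP ab; apply/mdvdP=> i; rewrite !ffunE leq_add2r. Qed.

Lemma mquo_mmul a b : mquo (mmul a b) a = b.
Proof. by apply/ffunP=> i; rewrite !ffunE addKn. Qed.

Lemma mmul_mquo a b : mdvd a b -> mmul a (mquo b a) = b.
Proof. by move=> /mdvdP ab; apply/ffunP=> i; rewrite !ffunE subnKC. Qed.

Lemma mquoK a b : mdvd a b -> mquo b (mquo b a) = a.
Proof. by move=> /mdvdP ab; apply/ffunP=> i; rewrite !ffunE subKn. Qed.

Lemma mdvd_lcml a b : mdvd a (mlcm a b).
Proof. by apply/mdvdP=> i; rewrite ffunE leq_maxl. Qed.

Lemma mdvd_lcmr a b : mdvd b (mlcm a b).
Proof. by apply/mdvdP=> i; rewrite ffunE leq_maxr. Qed.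

Lemma mlcmC a b : mlcm a b = mlcm b a.
Proof. by apply/ffunP=> i; rewrite !ffunE maxnC. Qed.

Lemma mdeg_mmul a b : mdeg (mmul a b) = mdeg a + mdeg b.
Proof. by rewrite /mdeg -big_split; apply: eq_bigr => i _; rewrite ffunE. Qed.

Lemma mexp_le_mdeg a i : a i <= mdeg a.
Proof. by rewrite /mdeg (bigD1 i) //= leq_addr. Qed.

Lemma mdeg_mdvd a b : mdvd a b -> mdeg a <= mdeg b.
Proof. by move=> /mmul_mquo <-; rewrite mdeg_mmul leq_addr. Qed.

Lemma mdvd_mdeg_eq a b : mdvd a b -> mdeg a = mdeg b -> a = b.
Proof.
move=> ab; rewrite -{1}(mmul_mquo ab) mdeg_mmul -{1}[mdeg a]addn0 => /addnI q0.
apply: mdvd_anti ab _; apply/mdvdP=> i.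
by have := mexp_le_mdeg (mquo b a) i; rewrite -q0 ffunE leqn0 subn_eq0.
Qed.

Lemma mdeg_gt0 a : 0 < mdeg a -> exists i, 0 < a i.
Proof.
move=> a_gt0; apply/existsP; apply: contraLR a_gt0; rewrite negb_exists => /forallP a0.
by rewrite lt0n negbK /mdeg big1 // => i _; apply/eqP; rewrite -leqn0 leqNgt a0.
Qed.

Lemma mdvd_xvar i a : mdvd (xvar i) a = (0 < a i).
Proof.
apply/mdvdP/idP => [/(_ i)|ai j]; first by rewrite ffunE eqxx.
by rewrite ffunE; case: eqP => [->|].
Qed.

Lemma mdeg_xvar i : mdeg (xvar i) = 1.
Proof.
rewrite /mdeg (bigD1 i) //= ffunE eqxx big1 // => j /negbTE ji.
by rewrite ffunE ji.
Qed.

Lemma mdeg_eq1 a : mdeg a = 1 -> exists i, a = xvar i.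
Proof.
move=> a1; have [i ai] : exists i, 0 < a i by apply: mdeg_gt0; rewrite a1.
by exists i; apply/esym/mdvd_mdeg_eq; rewrite ?mdvd_xvar ?mdeg_xvar.
Qed.

Definition mdec m : mon n :=
  if [pick j | 0 < m j] is Some j then mquo m (xvar j) else m.

Lemma mdvd_mdec m : mdvd (mdec m) m.
Proof. by rewrite /mdec; case: pickP => [j _|_]; rewrite ?mdvd_mquo ?mdvd_refl. Qed.

Lemma mdeg_mdec m : mdeg (mdec m) = (mdeg m).-1.
Proof.
rewrite /mdec; case: pickP => [j mj|m0].
  by rewrite -{2}(@mmul_mquo (xvar j) m) ?mdvd_xvar // mdeg_mmul mdeg_xvar.
by have [->|/mdeg_gt0 [i]] := posnP (mdeg m); rewrite ?m0.
Qed.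

Lemma mdvd_iter_mdec k m : mdvd (iter k mdec m) m.
Proof. by elim: k => [|k IH] /=; [exact: mdvd_refl | exact: mdvd_trans (mdvd_mdec _) IH]. Qed.

Lemma mdeg_iter_mdec k m : mdeg (iter k mdec m) = mdeg m - k.
Proof. by elim: k => [|k IH] /=; rewrite ?subn0 // mdeg_mdec IH subnS. Qed.

Definition x0pow e : mon n := [ffun j => if j == ord0 then e else 0].

Lemma mdeg_x0pow e : mdeg (x0pow e) = e.
Proof.
rewrite /mdeg (bigD1 ord0) //= ffunE eqxx big1 ?addn0 // => j /negbTE j0.
by rewrite ffunE j0.
Qed.

Lemma mdvd_mulx0pow g m e : g ord0 = 0 -> mdvd g (mmul m (x0pow e)) -> mdvd g m.
Proof.
move=> g0 /mdvdP gm; apply/mdvdP=> i; have := gm i; rewrite !ffunE.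
by case: eqP => [->|_]; rewrite ?g0 ?addn0.
Qed.

Lemma mem_monsOfDeg m t : (m \in monsOfDeg n t) = (mdeg m == t).
Proof.
rewrite mem_filter andb_idr // => /eqP mt; apply/mapP.
exists [ffun i => inord (m i)]; first by rewrite mem_enum.
by apply/ffunP=> i; rewrite !ffunE inordK // ltnS -mt mexp_le_mdeg.
Qed.

Lemma monsOfDeg_uniq t : uniq (monsOfDeg n t).
Proof.
apply/filter_uniq; rewrite map_inj_uniq ?enum_uniq //.
by move=> u w /ffunP uw; apply/ffunP=> i; apply/val_inj; have := uw i; rewrite !ffunE.
Qed.

End Monomials.

Arguments x0pow {n} e.

Section MonomialIdeal.
Variables (n : nat) (G : seq (mon n)).
Implicit Types (a b g m : mon n).

Lemma inJ_mdvd a b : inJ G a -> mdvd a b -> inJ G b.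
Proof. by move=> /hasP [g gG ga] ab; apply/hasP; exists g => //; apply: mdvd_trans ga ab. Qed.

Lemma inJ_gen g : g \in G -> inJ G g.
Proof. by move=> gG; apply/hasP; exists g; rewrite ?mdvd_refl. Qed.

Lemma size_le_hilbFun (s : seq (mon n)) t : uniq s ->
  (forall m, m \in s -> mdeg m = t /\ ~~ inJ G m) -> size s <= hilbFun G t.
Proof.
move=> s_uniq sP; rewrite /hilbFun -size_filter; apply: uniq_leq_size => // m ms.
by have [mt mJ] := sP m ms; rewrite mem_filter mJ mem_monsOfDeg mt eqxx.
Qed.

Hypothesis G_min : minimal_gens G.

Lemma proper_mdvd_gen_notinJ g m : g \in G -> mdvd m g -> m != g -> ~~ inJ G m.
Proof.
move=> gG mg; apply: contra => /hasP [g' g'G g'm].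
have eg' : g' = g by case: G_min => _; apply; rewrite // (mdvd_trans g'm mg).
by apply/eqP; apply: mdvd_anti mg _; rewrite -eg'.
Qed.

Hypotheses (J_borel : borel G) (J_sat : saturated G).

Lemma borel_xvar_shift m k k' : inJ G (mmul m (xvar (inord k))) -> k <= k' <= n ->
  inJ G (mmul m (xvar (inord k'))).
Proof.
move=> mkJ; elim: k' => [|k' IH] /andP [kk' k'n].
  by move: kk'; rewrite leqn0 => /eqP <-.
move: kk'; rewrite leq_eqVlt ltnS => /orP [/eqP <- //|kk'].
have kJ : inJ G (mmul m (xvar (inord k'))) by apply: IH; rewrite kk' ltnW.
have := J_borel (j := inord k') _ kJ; rewrite inordK ?ltnS ?(ltnW k'n) // => /(_ k'n).
by rewrite !ffunE eqxx addn1 [mmul m _]mmulC mquo_mmul; apply.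
Qed.

(** If x_0 divided g, the Borel property would put every x_i (g / x_0) in J,
    hence g / x_0 in J by saturation. *)
Lemma gen_x0_free g : g \in G -> g ord0 = 0.
Proof.
move=> gG; apply/eqP; rewrite -leqn0 leqNgt; apply/negP => g0.
have x0g : mdvd (xvar ord0) g by rewrite mdvd_xvar.
set h := mquo g (xvar ord0).
have hJ : inJ G h.
  apply: J_sat; exists 1 => e /mdeg_eq1 [i ->].
  have -> : i = inord i by apply/val_inj; rewrite /= inordK.
  apply: (@borel_xvar_shift _ 0); last by rewrite /= -ltnS.
  rewrite (_ : inord 0 = ord0) ?[mmul h _]mmulC ?mmul_mquo ?inJ_gen //.
  by apply/val_inj; rewrite /= inordK.
have hg : h != g by apply/eqP=> /ffunP/(_ ord0); rewrite /h !ffunE eqxx /=; lia.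
by rewrite (negbTE (proper_mdvd_gen_notinJ gG (mdvd_mquo _ _) hg)) in hJ.
Qed.

Lemma notinJ_mulx0pow m e : ~~ inJ G m -> ~~ inJ G (mmul m (x0pow e)).
Proof.
apply: contra => /hasP [g gG gm]; apply/hasP; exists g => //.
exact: mdvd_mulx0pow (gen_x0_free gG) gm.
Qed.

(** The proper divisors [mdec^(k+1) g] of a generator, padded with powers of x_0
    to degree t, are deg g distinct monomials of degree t outside J. *)
Lemma gen_deg_le_hilbFun g t : g \in G -> mdeg g <= t -> mdeg g <= hilbFun G t.
Proof.
move=> gG gt; pose del k := iter k.+1 (@mdec n) g.
pose mu k := mmul (del k) (x0pow (t - mdeg (del k))).
have del_deg k : mdeg (del k) = mdeg g - k.+1 by rewrite mdeg_iter_mdec.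
have mu0 k : mu k ord0 = t - (mdeg g - k.+1).
  have /mdvdP/(_ ord0) := mdvd_iter_mdec k.+1 g.
  rewrite (gen_x0_free gG) leqn0 /mu ffunE => /eqP ->.
  by rewrite ffunE eqxx del_deg.
rewrite -[mdeg g](size_iota 0) -(size_map mu); apply: size_le_hilbFun.
  rewrite map_inj_in_uniq ?iota_uniq // => k k'; rewrite !mem_iota /= => kg k'g.
  by move/ffunP/(_ ord0); rewrite !mu0; lia.
move=> m /mapP [k]; rewrite mem_iota /= => kg ->; split.
  by rewrite mdeg_mmul mdeg_x0pow del_deg; lia.
apply/notinJ_mulx0pow/(proper_mdvd_gen_notinJ gG (mdvd_iter_mdec _ _)).
by apply: contraTneq kg => dg; move: (del_deg k); rewrite /del dg; lia.
Qed.

Lemma gen_deg_le d g : hilbPolyConst G d -> g \in G -> mdeg g <= d.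
Proof.
move=> [t0 hilb_t0] gG; rewrite -(hilb_t0 (maxn t0 (mdeg g))) ?leq_maxl //.
by rewrite gen_deg_le_hilbFun ?leq_maxr.
Qed.

End MonomialIdeal.

Definition inJge n (G : seq (mon n)) (d : nat) (m : mon n) : bool :=
  inJ G m && (d <= mdeg m).

Section MinimalGenerators.
Variables (n : nat) (G : seq (mon n)) (d : nat).
Implicit Types (a b : BM G d) (m : mon n).

Lemma bm_inj : injective (@bm n G d).
Proof.
by move=> f g /ffunP fg; apply/ffunP=> i; apply/val_inj; have := fg i; rewrite !ffunE.
Qed.

Lemma inJge_mdvd m m' : inJge G d m -> mdvd m m' -> inJge G d m'.
Proof.
by move=> /andP [mJ md] mm'; rewrite /inJge (inJ_mdvd mJ mm') (leq_trans md) ?mdeg_mdvd.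
Qed.

Lemma isGen_inJge a : isGen a -> inJge G d (bm a).
Proof. by case/and3P=> aJ ad _; apply/andP. Qed.

Lemma isGen_mdvd_eq a b : isGen a -> isGen b -> mdvd (bm a) (bm b) -> a = b.
Proof.
move=> a_gen /and3P [_ _ /forallP /(_ a)] b_min ab; apply/bm_inj/eqP.
by move: b_min; rewrite ab -/(inJge G d _) isGen_inJge //= implybF negbK.
Qed.

End MinimalGenerators.

Section Tangent.
Variables (n : nat) (K : fieldType) (le : rel (mon n)) (G : seq (mon n)) (d : nat).
Variable x : Var le G d.
Implicit Types (a b : BM G d) (m : mon n).
Local Open Scope ring_scope.

Let a0 := (sval x).1.
Let b0 := (sval x).2.
Let e : 'rV[K]_(nvars le G d) := delta_mx 0 (enum_rank x).
Let F := markedF e.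

Lemma coef0_markedF a m : (F a m)`_0 = (m == bm a)%:R.
Proof.
rewrite coefD coef_sum big1 => [|y _]; last by rewrite coefMX.
by rewrite -polyC_natr coefC addr0.
Qed.

Lemma coef1_markedF a m : (F a m)`_1 != 0 -> a = a0 /\ m = bm b0.
Proof.
rewrite coefD -polyC_natr coefC add0r coef_sum => nz.
suff /andP [/eqP -> /eqP ->] : (a == a0) && (m == bm b0) by [].
apply: contraNT nz => not_x; apply/eqP/big1 => y /andP [/eqP ya /eqP ym].
rewrite coefMX coefC mxE eqxx /=; case: eqP => // /enum_rank_inj yx.
by move: not_x; rewrite /a0 /b0 -yx ya ym !eqxx.
Qed.

Lemma coef0_xshift_markedF a L m : mdvd (bm a) L ->
  (xshift 1 (mquo L (bm a)) (F a) m)`_0 = (m == L)%:R.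
Proof.
rewrite /xshift => aL; case: ifPn => [dv|ndv]; rewrite ?coef0.
  rewrite mul1r coef0_markedF; congr (nat_of_bool _)%:R.
  by apply/eqP/eqP=> [ma|->]; rewrite ?mquoK // -(mmul_mquo dv) ma mmulC mmul_mquo.
by case: eqP ndv => // ->; rewrite mdvd_mquo.
Qed.

(** A reduction step subtracts a multiple [c x^(m - a) F_a] with [c] having no
    constant term, so its eps-term is [c_1 x^(m - a) x^a], supported on [m],
    which lies in J_{>=d}. *)
Lemma reduces_coef1 H H' : reduces F H H' -> (forall m, (H m)`_0 = 0) ->
  forall m, ~~ inJge G d m -> (H' m)`_1 = (H m)`_1.
Proof.
elim=> {H H'} [//|H a m H' a_gen am _ IH] H0 m' m'J.
rewrite IH // => [|m'']; rewrite coefB /xshift; case: ifP => [dv|_];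
  rewrite ?coef0 ?subr0 ?H0 //; last by rewrite coef0M !H0 mul0r subrr.
rewrite coefM !big_ord_recr big_ord0 /= H0 mul0r !add0r coef0_markedF.
case: eqP => [m'a|_] /=; last by rewrite mulr0n mulr0 subr0.
have m'm : m' = m by rewrite -(mmul_mquo dv) m'a mmulC mmul_mquo.
by move: m'J; rewrite m'm (inJge_mdvd (isGen_inJge a_gen) am).
Qed.

Hypothesis lcm_shift_inJge : forall a, isGen a -> a0 != a ->
  inJge G d (mmul (mquo (mlcm (bm a0) (bm a)) (bm a0)) (bm b0)).

Lemma coef1_xshift_markedF a a' m : isGen a' -> a != a' -> ~~ inJge G d m ->
  (xshift 1 (mquo (mlcm (bm a) (bm a')) (bm a)) (F a) m)`_1 = 0.
Proof.
rewrite /xshift => a'_gen aa' mJ; case: ifP => [dv|_]; rewrite ?coef0 // mul1r.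
apply/eqP; apply: contraNT mJ => /coef1_markedF [aa0 mb0].
by rewrite -(mmul_mquo dv) mb0 aa0 lcm_shift_inJge // -aa0.
Qed.

Lemma tangentVec_delta : tangentVec e.
Proof.
move=> a a' a_gen a'_gen aa' H red H_red m.
have S0 m' : (Spoly e a a' m')`_0 = 0.
  by rewrite /Spoly -/F coefB !coef0_xshift_markedF ?mdvd_lcml ?mdvd_lcmr ?subrr.
have [mJ|mJ] := boolP (inJge G d m); first by case/andP: mJ => ? ?; rewrite H_red ?coef0.
rewrite (reduces_coef1 red S0 mJ) /Spoly -/F coefB coef1_xshift_markedF // mlcmC.
by rewrite coef1_xshift_markedF 1?eq_sym ?subrr.
Qed.

End Tangent.

Section RowSpaces.
Local Open Scope ring_scope.

Lemma size_le_dimv_delta (K : fieldType) N (s : seq 'I_N) (T : {vspace 'rV[K]_N}) :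
  uniq s -> (forall i, i \in s -> delta_mx 0 i \in T) -> (size s <= \dim T)%N.
Proof.
case: s => [//|i0 s'] s_uniq sT; set s := i0 :: s' in s_uniq sT *.
pose X := [seq delta_mx 0 i : 'rV[K]_N | i <- s].
have size_X : size X = size s by rewrite size_map.
have X_free : free X.
  have ltX (l : 'I_(size X)) : (l < size s)%N by rewrite -size_X ltn_ord.
  apply/(@freeP _ _ _ (in_tuple X)) => k kX j.
  have := congr1 (fun v : 'rV[K]_N => v 0 (nth i0 s j)) kX.
  rewrite /= summxE mxE (bigD1 j) //= big1 => [|l lj]; rewrite mxE (nth_map i0) ?mxE //=.
  - by rewrite !eqxx mulr1 addr0.
  - by rewrite (nth_uniq i0) ?ltX // (inj_eq (@ord_inj _)) eq_sym (negbTE lj) mulr0.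
have X_T : (<<X>> <= T)%VS by apply/span_subvP => v /mapP [i si ->]; apply: sT.
by rewrite -size_X -(eqP X_free) dimvS.
Qed.

End RowSpaces.

Section GeneratorsTimesB.
Variables (n d : nat) (le : rel (mon n)) (G : seq (mon n)).
Hypotheses (le_term : term_order le) (G_min : minimal_gens G).
Hypotheses (J_borel : borel G) (J_sat : saturated G).
Hypotheses (J_hilb : hilbPolyConst G d) (J_seg : hilb_segment le G d).
Implicit Types (al be m : mon n) (a : BM G d).

Let x0_free := gen_x0_free G_min J_borel J_sat.

Definition x0pad al : mon n := mmul al (x0pow (d - mdeg al)).

Definition toBM m : BM G d := [ffun i => inord (m i)].

Lemma bm_toBM m : mdeg m = d -> bm (toBM m) = m.
Proof.
move=> md; apply/ffunP=> i; rewrite !ffunE inordK // ltnS.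
by rewrite (leq_trans (mexp_le_mdeg m i)) // md leq_addr.
Qed.

Lemma x0pad_neq0 al i : i != ord0 -> x0pad al i = al i.
Proof. by move=> /negbTE i0; rewrite !ffunE i0 addn0. Qed.

Lemma mdeg_x0pad al : al \in G -> mdeg (x0pad al) = d.
Proof. by move=> alG; rewrite mdeg_mmul mdeg_x0pow subnKC ?(gen_deg_le G_min). Qed.

Lemma bm_toBM_x0pad al : al \in G -> bm (toBM (x0pad al)) = x0pad al.
Proof. by move=> alG; rewrite bm_toBM ?mdeg_x0pad. Qed.

Lemma x0pad_inj : {in G &, injective x0pad}.
Proof.
move=> al al' alG al'G e; apply/ffunP=> i; have [->|i0] := eqVneq i ord0.
  by rewrite !x0_free.
by rewrite -(x0pad_neq0 al i0) -(x0pad_neq0 al' i0) e.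
Qed.

Lemma isGen_x0pad al : al \in G -> isGen (toBM (x0pad al)).
Proof.
move=> alG; rewrite /isGen bm_toBM_x0pad // mdeg_x0pad // leqnn /=.
rewrite (inJ_mdvd (inJ_gen alG)) ?mdvd_mull //=; apply/forallP=> b.
apply/implyP=> /andP [ba nba]; rewrite negb_and -ltnNge orbC.
have := mdeg_mdvd ba; rewrite mdeg_x0pad // leq_eqVlt => /orP [/eqP deq|-> //].
by case/negP: nba; rewrite (mdvd_mdeg_eq ba) ?mdeg_x0pad.
Qed.

(** A minimal generator of J_{>=d} agreeing with [x0pad al] outside x_0 is
    divisible by [al] (the only generator of J below it), hence comparable with,
    hence equal to, [x0pad al]. *)
Lemma isGen_eq_x0pad al a : al \in G -> isGen a ->
  (forall i, i != ord0 -> bm a i <= x0pad al i) -> a = toBM (x0pad al).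
Proof.
move=> alG a_gen a_le; have /and3P [/hasP [g gG ga] _ _] := a_gen.
have gal : mdvd g al.
  apply/mdvdP=> i; have [->|i0] := eqVneq i ord0; first by rewrite x0_free.
  by rewrite -(x0pad_neq0 al i0) (leq_trans _ (a_le i i0)) //; move/mdvdP: ga.
have eg : g = al by case: G_min => _; apply.
have x0pad_gen := isGen_x0pad alG.
have [le0|lt0] := leqP (x0pad al ord0) (bm a ord0).
  apply/esym/isGen_mdvd_eq => //; rewrite bm_toBM_x0pad //; apply/mdvdP=> i.
  have [->//|i0] := eqVneq i ord0.
  by rewrite x0pad_neq0 // -eg; move/mdvdP: ga.
apply: isGen_mdvd_eq => //; rewrite bm_toBM_x0pad //; apply/mdvdP=> i.
by have [->|i0] := eqVneq i ord0; [apply: ltnW | apply: a_le].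
Qed.

Lemma Bset_mem be : be \in Bset G d ->
  [/\ mdeg be = d, ~~ inJ G be & inJ G (mmul (xvar (inord 1)) be)].
Proof. by rewrite mem_filter mem_monsOfDeg => /andP [/andP [-> ->] /eqP ->]. Qed.

Lemma Bset_uniq : uniq (Bset G d).
Proof. exact/filter_uniq/monsOfDeg_uniq. Qed.

Lemma lcm_shift_x0pad_inJge al be a : al \in G -> be \in Bset G d ->
  isGen a -> toBM (x0pad al) != a ->
  inJge G d (mmul (mquo (mlcm (x0pad al) (bm a)) (x0pad al)) be).
Proof.
move=> alG beB a_gen neq; have [be_d _ be1J] := Bset_mem beB.
rewrite /inJge mdeg_mmul be_d leq_addl andbT.
have [/existsP [j /andP [j_gt0 lt_j]]|] :=
  boolP [exists j : 'I_n.+1, (0 < j) && (x0pad al j < bm a j)].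
  have bejJ : inJ G (mmul be (xvar j)).
    rewrite (_ : j = inord j); last by apply/val_inj; rewrite /= inordK.
    apply: (@borel_xvar_shift _ _ J_borel _ 1); first by rewrite mmulC.
    by rewrite j_gt0 -ltnS /=.
  apply: inJ_mdvd bejJ _; rewrite mmulC mdvd_mmul2r // mdvd_xvar.
  by rewrite [mquo _ _ _]ffunE [mlcm _ _ _]ffunE subn_gt0 (leq_trans lt_j) ?leq_maxr.
rewrite negb_exists => /forallP le_j; case/eqP: neq; apply/esym/isGen_eq_x0pad => // i i0.
have i_gt0 : 0 < i by rewrite lt0n; apply: contra i0 => /eqP i_0; apply/eqP/val_inj.
by move: (le_j i); rewrite i_gt0 /= -leqNgt.
Qed.

Definition varOf (p : mon n * mon n) : BM G d * BM G d :=
  (toBM (x0pad p.1), toBM p.2).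

Definition GxB := [seq (al, be) | al <- G, be <- Bset G d].

Lemma GxB_mem p : p \in GxB -> p.1 \in G /\ p.2 \in Bset G d.
Proof. by case/allpairsP=> [[al be] [alG beB ->]]. Qed.

Lemma isVar_varOf p : p \in GxB -> isVar le (varOf p).
Proof.
case: p => al be /GxB_mem [alG beB]; have [be_d be_J _] := Bset_mem beB.
rewrite /isVar /= isGen_x0pad //= !bm_toBM ?mdeg_x0pad // be_d eqxx be_J /tlt.
have alJ : inJ G (x0pad al) by rewrite (inJ_mdvd (inJ_gen alG)) ?mdvd_mull.
have [[_ _ _ le_total _] _] := le_term.
have /negbTE nle : ~~ le (x0pad al) be.
  by apply: contra be_J; apply: J_seg; rewrite ?mdeg_x0pad.
have := le_total be (x0pad al); rewrite nle orbF => ->.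
by apply: contra be_J => /eqP ->.
Qed.

Lemma varOf_inj : {in GxB &, injective varOf}.
Proof.
move=> [al be] [al' be'] /GxB_mem [/= alG beB] /GxB_mem [/= al'G be'B] [e1 e2].
have [be_d _ _] := Bset_mem beB; have [be'_d _ _] := Bset_mem be'B.
move: e1 e2 => /(congr1 (@bm _ _ _)) e1 /(congr1 (@bm _ _ _)) e2.
rewrite !bm_toBM_x0pad // in e1; rewrite !bm_toBM // in e2.
by rewrite (x0pad_inj alG al'G e1) e2.
Qed.

Lemma tangentVec_varOf (K : fieldType) p (x : Var le G d) :
  p \in GxB -> sval x = varOf p ->
  tangentVec (delta_mx 0 (enum_rank x) : 'rV[K]_(nvars le G d))%R.
Proof.
case: p => al be /GxB_mem [alG beB] xp; apply: tangentVec_delta => a a_gen.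
have [be_d _ _] := Bset_mem beB.
by rewrite xp /= bm_toBM_x0pad // bm_toBM //; apply: lcm_shift_x0pad_inJge.
Qed.

Lemma tangent_deltas (K : fieldType) : exists s : seq 'I_(nvars le G d),
  [/\ uniq s, size s = size G * size (Bset G d) &
      forall i, i \in s -> tangentVec (delta_mx 0 i : 'rV[K]_(nvars le G d))%R].
Proof.
have GxB_uniq : uniq GxB.
  case: G_min => G_uniq _; rewrite allpairs_uniq ?Bset_uniq //.
  by move=> -[? ?] [? ?] _ _ [-> ->].
pose vs : seq (Var le G d) := pmap insub (map varOf GxB).
exists (map enum_rank vs); split.
- rewrite (map_inj_uniq enum_rank_inj) pmap_sub_uniq // map_inj_in_uniq //.
  exact: varOf_inj.
- rewrite size_map size_pmap_sub count_map (eq_in_count (a2 := predT)).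
    by rewrite count_predT size_allpairs.
  by move=> p pGxB; rewrite /= isVar_varOf.
- move=> i /mapP [x]; rewrite mem_pmap_sub => /mapP [p pGxB xp] ->.
  exact: tangentVec_varOf pGxB xp.
Qed.

End GeneratorsTimesB.

Theorem mainTheorem14
  (K : closedFieldType) (charK0 : [pchar K]%R =i pred0)
  (n : nat) (n_ge1 : (0 < n)%N)
  (d : nat) (d_ge1 : (1 <= d)%N)
  (le : rel (mon n)) (le_term : term_order le)
  (G : seq (mon n)) (G_min : minimal_gens G)
  (J_borel : borel G) (J_sat : saturated G)
  (J_hilb : hilbPolyConst G d) (J_seg : hilb_segment le G d)
  (T : {vspace 'rV[K]_(nvars le G d)})
  (T_tangent : forall v, v \in T <-> @tangentVec n K le G d v) :
  (size G * size (Bset G d) <= \dim T)%N.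
Proof.
have [s [s_uniq s_size s_tangent]] :=
  tangent_deltas le_term G_min J_borel J_sat J_hilb J_seg K.
by rewrite -s_size size_le_dimv_delta // => i /s_tangent /T_tangent.
Qed.
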